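(* Let $H$ be a separable complex Hilbert space and $X$ a locally compact space with positive Borel measure $\mu$; give $F$, $F_0$, $\overline{F}_0$, $F_1$ the topology of the norm $\|f\|_J=\sup_{x\in X}\|f(x)\|_H$ and $\operatorname{GL}(H)$ the operator norm topology. If $\zeta^{-1}$ is continuous, then $\theta_*:F_1\times\overline{F}_0\to F$ is a homeomorphism and $F$ is a principal fiber bundle with base space $\overline{F}_0$, fiber $F_1$, and structure group $\operatorname{GL}(H)$.
   Context: A frame on $H$ is a map $f:X\to H$ such that $x\mapsto\langle\phi,f(x)\rangle$ is measurable for every $\phi\in H$ and there exist $0<A\le B$ with $A\|\phi\|^2\le\int_X|\langle\phi,f(x)\rangle|^2d\mu(x)\le B\|\phi\|^2$ for all $\phi$; it is Parseval if $A=B=1$. $\operatorname{GL}(H)$ is the group of bounded invertible operators with bounded inverse, $U(H)$ the unitary group. $F$ is the set of frames $f$ with $\|f\|_J<\infty$, $F_0$ the Parseval ones. $(Af)(x)=A[f(x)]$. $\overline{F}_0\subset F_0$ is a fixed transversal of $F_0/U(H)$ (exactly one element from each orbit $\{Vf:V\in U(H)\}$). The map $\zeta:\operatorname{GL}(H)\times\overline{F}_0\to F$, $\zeta(A,f)=Af$, is a bijection; $\pi_1$ is projection onto the $\operatorname{GL}(H)$ factor. Fix $f_{10}\in\overline{F}_0$, let $F_1=\{Af_{10}:A\in\operatorname{GL}(H)\}$, $\theta:F_1\to\operatorname{GL}(H)$, $\theta(f)=\pi_1(\zeta^{-1}(f))$, and $\theta_*(f_1,f_0)=\zeta(\theta(f_1),f_0)$.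 A topological space $E$ is a fiber bundle with base space $B$ and fiber $E_1$ if there is a continuous surjection $\pi:E\to B$ such that each point of $E$ has a neighborhood $W\subseteq B$ of its image and a homeomorphism $\vartheta:\pi^{-1}(W)\to W\times E_1$ with $\pi=\pi_W\circ\vartheta$ on $\pi^{-1}(W)$; it is principal with structure group $G$ if $E_1$ is a principal homogeneous space under an action of $G$. *)

From HB Require Import structures.
From mathcomp Require Import all_boot all_order all_algebra.
From mathcomp Require Import all_classical all_reals all_analysis.
From mathcomp Require Import complex.
Set Implicit Arguments. Unset Strict Implicit. Unset Printing Implicit Defensive.
Import Order.TTheory GRing.Theory Num.Theory.
Local Open Scope classical_set_scope.
Local Open Scope ring_scope.

Section Hilbert.
Variables (R : realType) (V : lmodType R[i]) (ip : V -> V -> R[i]).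

Definition hnorm (x : V) : R := Num.sqrt (complex.Re (ip x x)).

Definition is_inner_product : Prop :=
  [/\ (forall (a : R[i]) (x y z : V), ip (a *: x + y) z = a * ip x z + ip y z),
      (forall x y : V, ip y x = conjc (ip x y)),
      (forall x : V, 0 <= complex.Re (ip x x)) &
      (forall x : V, ip x x = 0 -> x = 0)].

Definition hcomplete : Prop :=
  forall u : nat -> V,
    (forall e : R, 0 < e -> exists N : nat, forall m n : nat,
        (N <= m)%N -> (N <= n)%N -> hnorm (u m - u n) < e) ->
    exists l : V, forall e : R, 0 < e -> exists N : nat, forall n : nat,
        (N <= n)%N -> hnorm (u n - l) < e.

Definition hseparable : Prop :=
  exists s : nat -> V, forall (x : V) (e : R), 0 < e -> exists n : nat, hnorm (x - s n) < e.

Definition separable_hilbert : Prop := [/\ is_inner_product, hcomplete & hseparable].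

Definition is_linear_op (A : V -> V) : Prop :=
  forall (a : R[i]) (x y : V), A (a *: x + y) = a *: A x + A y.

Definition bounded_op (A : V -> V) : Prop :=
  is_linear_op A /\ exists M : R, forall x : V, hnorm (A x) <= M * hnorm x.

Definition GLH : set (V -> V) :=
  [set A | bounded_op A /\ exists B : V -> V, [/\ bounded_op B, cancel A B & cancel B A]].

Definition unitary : set (V -> V) :=
  [set U | [/\ is_linear_op U, (forall y : V, exists x : V, U x = y) & forall x y : V, ip (U x) (U y) = ip x y]].

Definition opnorm (A : V -> V) : R := sup [set hnorm (A x) | x in [set x | hnorm x <= 1]].

Definition op_dist (A B : V -> V) : \bar R := (opnorm (fun x => A x - B x))%:E.

Variables (X : ptopologicalType)
  (mu : {measure set (g_sigma_algebraType (@open X)) -> \bar R}).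

Definition weakly_measurable (f : X -> V) : Prop :=
  forall phi : V,
    measurable_fun (setT : set (g_sigma_algebraType (@open X))) (fun x => complex.Re (ip phi (f x))) /\
    measurable_fun (setT : set (g_sigma_algebraType (@open X))) (fun x => complex.Im (ip phi (f x))).

Definition frame_integral (f : X -> V) (phi : V) : \bar R :=
  \int[mu]_(x in (setT : set (g_sigma_algebraType (@open X)))) (complex.Re (ip phi (f x)) ^+ 2 + complex.Im (ip phi (f x)) ^+ 2)%:E.

Definition is_frame (f : X -> V) : Prop :=
  weakly_measurable f /\
  exists A B : R, [/\ 0 < A, A <= B &
    forall phi : V, ((A * hnorm phi ^+ 2)%:E <= frame_integral f phi)%E /\
                    (frame_integral f phi <= (B * hnorm phi ^+ 2)%:E)%E].

Definition is_parseval (f : X -> V) : Prop :=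
  weakly_measurable f /\
  forall phi : V, ((hnorm phi ^+ 2)%:E <= frame_integral f phi)%E /\
                  (frame_integral f phi <= (hnorm phi ^+ 2)%:E)%E.

Definition norm_J (f : X -> V) : \bar R := ereal_sup (range (fun x => (hnorm (f x))%:E)).
Definition distJ (f g : X -> V) : \bar R := norm_J (fun x => f x - g x).

Definition Fset : set (X -> V) := [set f | is_frame f /\ (norm_J f < +oo)%E].
Definition F0set : set (X -> V) := [set f | is_parseval f /\ (norm_J f < +oo)%E].

Definition opact (A : V -> V) (f : X -> V) : X -> V := fun x => A (f x).

Definition is_F0_transversal (Fb0 : set (X -> V)) : Prop :=
  Fb0 `<=` F0set /\
  forall f, F0set f -> exists g, [/\ Fb0 g, (exists2 U, unitary U & g = opact U f) &
      forall g', Fb0 g' -> (exists2 U, unitary U & g' = opact U f) -> g' = g].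

End Hilbert.

Section Topo.
Variable R : realType.

Definition metric_open {T : Type} (d : T -> T -> \bar R) (S : set T) (U : set T) : Prop :=
  U `<=` S /\ forall u, U u -> exists2 e : R, 0 < e &
      forall v, S v -> (d u v < e%:E)%E -> U v.

End Topo.

Definition prod_open {T1 T2 : Type} (S1 : set T1) (O1 : set T1 -> Prop)
    (S2 : set T2) (O2 : set T2 -> Prop) (U : set (T1 * T2)) : Prop :=
  U `<=` S1 `*` S2 /\ forall p, U p -> exists U1 U2,
      [/\ O1 U1, O2 U2, U1 p.1, U2 p.2 & U1 `*` U2 `<=` U].

Definition cont_on {T1 T2 : Type} (S1 : set T1) (O1 : set T1 -> Prop)
    (S2 : set T2) (O2 : set T2 -> Prop) (f : T1 -> T2) : Prop :=
  (forall x, S1 x -> S2 (f x)) /\ forall U, O2 U -> O1 (S1 `&` f @^-1` U).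

Definition homeomorphism {T1 T2 : Type} (S1 : set T1) (O1 : set T1 -> Prop)
    (S2 : set T2) (O2 : set T2 -> Prop) (f : T1 -> T2) : Prop :=
  exists g : T2 -> T1,
    [/\ cont_on S1 O1 S2 O2 f, cont_on S2 O2 S1 O1 g,
        (forall x, S1 x -> g (f x) = x) & (forall y, S2 y -> f (g y) = y)].

(** fiber bundle: E (with topology OE) over base B (topology OB) with fiber E1
    (topology O1); subspaces carry the induced topology, computed by [sub_open] *)
Definition fiber_bundle {TE TB : Type}
    (E : set TE) (OE : set TE -> Prop) (B : set TB) (OB : set TB -> Prop)
    (sub_openE : set TE -> set TE -> Prop) (sub_openB : set TB -> set TB -> Prop)
    (E1 : set TE) (O1 : set TE -> Prop) : Prop :=
  exists pi : TE -> TB,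
    [/\ cont_on E OE B OB pi, (forall b, B b -> exists2 e, E e & pi e = b) &
      forall e, E e -> exists W : set TB,
        [/\ W `<=` B, (exists O, [/\ OB O, O (pi e) & O `<=` W]) &
          exists vt : TE -> TB * TE,
            homeomorphism (E `&` pi @^-1` W) (sub_openE (E `&` pi @^-1` W))
                          (W `*` E1) (prod_open W (sub_openB W) E1 O1) vt /\
            (forall y, (E `&` pi @^-1` W) y -> pi y = (vt y).1)]].

Definition principal_homogeneous {TG TE : Type} (G : set (TG -> TG))
    (E1 : set TE) : Prop :=
  exists act : (TG -> TG) -> TE -> TE,
    [/\ (forall A e, G A -> E1 e -> E1 (act A e)),
        (forall e, E1 e -> act id e = e),
        (forall A B e, G A -> G B -> E1 e -> act (A \o B) e = act A (act B e)),
        (forall e e', E1 e -> E1 e' -> exists2 A, G A & act A e = e') &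
        (forall A B e, G A -> G B -> E1 e -> act A e = act B e -> A = B)].

Arguments distJ {R V} ip {X} f g.
Arguments op_dist {R V} ip A B.

From HB Require Import structures.
From mathcomp Require Import all_boot all_order all_algebra.
From mathcomp Require Import all_classical all_reals all_analysis.
From mathcomp Require Import complex.
From mathcomp Require Import ring lra.
Set Implicit Arguments. Unset Strict Implicit. Unset Printing Implicit Defensive.
Import Order.TTheory GRing.Theory Num.Theory.
Local Open Scope classical_set_scope.
Local Open Scope ring_scope.

(** The map [zeta : (A, f) |-> A f] is jointly continuous for the operator
  norm and [||.||_J]; together with the continuity of [zeta^-1] it is a
  homeomorphism [GL(H) x Fb0 ~ F].  On the orbit [F1 = GL(H) f10] the map
  [theta] is the restriction of [fst \o zeta^-1], whose inverse is
  [A |-> A f10]; so [theta x id] is a homeomorphism [F1 x Fb0 ~ GL(H) x Fb0]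
  and [theta_star = zeta \o (theta x id)] is a homeomorphism as well.  Its
  inverse, followed by the swap of factors, is a global trivialisation of
  the projection [f |-> snd (zeta^-1 f)] of [F] onto [Fb0] with fibre [F1].
  Finally [GL(H)] acts simply transitively on [F1] because [zeta] is
  injective. *)

Lemma le_of_sqr_le (R : realDomainType) (b s : R) : 0 <= s -> b * b <= s * s -> b <= s.
Proof. by move=> s0 bs; rewrite leNgt; apply/negP => sb; nra. Qed.

Lemma exists_small_factor (R : realFieldType) (e K : R) : 0 < e -> 0 < K ->
  exists2 d, 0 < d & d <= 1 /\ d * K < e.
Proof.
move=> e_gt0 K_gt0; exists (Num.min 1 (e / (2 * K))).
  by rewrite lt_min ltr01 /= divr_gt0 // mulr_gt0.
split; first by rewrite ge_min lexx.
apply: (@le_lt_trans _ _ (e / (2 * K) * K)); first by rewrite ler_pM2r // ge_min lexx orbT.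
by rewrite invfM mulrA divfK ?gt_eqF // ltr_pdivrMr // ltr_pMr // ltr1n.
Qed.

Section ComplexRe.
Variable R : realType.

Lemma ReD (a b : R[i]) : complex.Re (a + b) = complex.Re a + complex.Re b.
Proof. by case: a b => [? ?] [? ?]. Qed.

Lemma Re_conj (a : R[i]) : complex.Re (conjc a) = complex.Re a.
Proof. by case: a. Qed.

Lemma Re_realM (t : R) (a : R[i]) : complex.Re ((t%:C)%C * a) = t * complex.Re a.
Proof. by case: a => ? ? /=; rewrite mul0r subr0. Qed.

End ComplexRe.

Section HilbertSpace.
Variables (R : realType) (V : lmodType R[i]) (ip : V -> V -> R[i]).
Hypothesis hip : is_inner_product ip.

Local Notation hnorm := (hnorm ip).

Lemma ipDl x y z : ip (x + y) z = ip x z + ip y z.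
Proof. by case: hip => lin _ _ _; rewrite -[x]scale1r lin mul1r scale1r. Qed.

Lemma ip0l z : ip 0 z = 0.
Proof. by apply: (addrI (ip 0 z)); rewrite -ipDl !addr0. Qed.

Lemma ipZl a x z : ip (a *: x) z = a * ip x z.
Proof. by case: hip => lin _ _ _; rewrite -[a *: x]addr0 lin ip0l addr0. Qed.

Lemma ipNl x z : ip (- x) z = - ip x z.
Proof. by rewrite -scaleN1r ipZl mulN1r. Qed.

Lemma ipC x y : ip y x = conjc (ip x y).
Proof. by case: hip. Qed.

Lemma ipDr x y z : ip z (x + y) = ip z x + ip z y.
Proof. by rewrite ipC ipDl rmorphD /= -!ipC. Qed.

Lemma ipZr a x z : ip z (a *: x) = conjc a * ip z x.
Proof. by rewrite ipC ipZl rmorphM /= -ipC. Qed.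

Lemma ipNr x z : ip z (- x) = - ip z x.
Proof. by rewrite ipC ipNl rmorphN /= -ipC. Qed.

Lemma Re_ipxx_ge0 x : 0 <= complex.Re (ip x x).
Proof. by case: hip. Qed.

Lemma Re_ipDD x y : complex.Re (ip (x + y) (x + y)) =
  complex.Re (ip x x) + 2 * complex.Re (ip x y) + complex.Re (ip y y).
Proof. by rewrite ipDl !ipDr !ReD [ip y x]ipC Re_conj; lra. Qed.

Lemma hnorm_ge0 x : 0 <= hnorm x.
Proof. exact: sqrtr_ge0. Qed.

Lemma hnorm_sqr x : hnorm x * hnorm x = complex.Re (ip x x).
Proof. by rewrite -expr2 sqr_sqrtr // Re_ipxx_ge0. Qed.

Lemma hnorm0 : hnorm 0 = 0.
Proof. by rewrite /hnorm ip0l /= sqrtr0. Qed.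

Lemma hnorm_eq0 x : hnorm x = 0 -> x = 0.
Proof.
case: hip => _ ip_conj _ ipxx_eq0 /eqP; rewrite sqrtr_eq0 => Re_le0.
apply: ipxx_eq0; have := ip_conj x x; have := Re_ipxx_ge0 x.
by case: (ip x x) Re_le0 => a b /= ? ? [] ?; congr (Complex _ _); lra.
Qed.

Lemma hnormN x : hnorm (- x) = hnorm x.
Proof. by rewrite /hnorm ipNl ipNr opprK. Qed.

Lemma hnormZ (c : R) x : 0 <= c -> hnorm ((c%:C)%C *: x) = c * hnorm x.
Proof.
move=> c0; rewrite /hnorm ipZl ipZr conjc_real mulrA -rmorphM Re_realM.
by rewrite sqrtrM ?mulr_ge0 // -expr2 sqrtr_sqr ger0_norm.
Qed.

Lemma Re_ip_quadratic_ge0 x y (t : R) :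
  0 <= complex.Re (ip x x) + 2 * (t * complex.Re (ip x y))
       + t * (t * complex.Re (ip y y)).
Proof.
have := Re_ipxx_ge0 (x + (t%:C)%C *: y).
by rewrite Re_ipDD ipZr conjc_real Re_realM ipZl ipZr conjc_real !Re_realM.
Qed.

Lemma cauchy_schwarz x y : complex.Re (ip x y) <= hnorm x * hnorm y.
Proof.
set a := complex.Re (ip x x); set b := complex.Re (ip x y).
set c := complex.Re (ip y y).
have q := Re_ip_quadratic_ge0 x y; rewrite -/a -/b -/c in q.
have := hnorm_ge0 x; have := hnorm_ge0 y.
have [b_le0|b_gt0] := leP b 0; first by nra.
have c0 : 0 <= c := Re_ipxx_ge0 y.
have bb : b * b <= a * c.
  have [c_eq0|c_neq0] := eqVneq c 0.
    (* for [c = 0] the quadratic is affine in [t] with slope [2 b > 0] *)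
    have := q (- (a + 1) / (2 * b)); rewrite c_eq0 !mulr0 addr0.
    have -> : 2 * (- (a + 1) / (2 * b) * b) = - (a + 1) by field; lra.
    lra.
  have c_gt0 : 0 < c by rewrite lt_def c_neq0.
  have := q (- b / c).
  have -> : a + 2 * (- b / c * b) + - b / c * (- b / c * c) = (a * c - b * b) / c.
    by field; lra.
  by rewrite pmulr_lge0 ?invr_gt0 // subr_ge0.
move=> y0 x0; apply: le_of_sqr_le; first exact: mulr_ge0.
by rewrite mulrACA !hnorm_sqr.
Qed.

Lemma hnormD x y : hnorm (x + y) <= hnorm x + hnorm y.
Proof.
apply: le_of_sqr_le; first by rewrite addr_ge0 ?hnorm_ge0.
rewrite hnorm_sqr Re_ipDD -!hnorm_sqr.
by have := cauchy_schwarz x y; have := hnorm_ge0 x; have := hnorm_ge0 y; nra.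
Qed.

Lemma hnormB_le x y z : hnorm (x - z) <= hnorm (x - y) + hnorm (y - z).
Proof. by have := hnormD (x - y) (y - z); rewrite addrA subrK. Qed.

Lemma linear_op0 (A : V -> V) : is_linear_op A -> A 0 = 0.
Proof.
move=> linA; have := linA 1 0 0; rewrite !scale1r addr0 => A0D.
by apply: (addrI (A 0)); rewrite -A0D addr0.
Qed.

Lemma linear_opZ (A : V -> V) a x : is_linear_op A -> A (a *: x) = a *: A x.
Proof. by move=> linA; rewrite -[a *: x]addr0 linA linear_op0 // addr0. Qed.

Lemma linear_opB (A : V -> V) x y : is_linear_op A -> A (x - y) = A x - A y.
Proof.
by move=> linA; have := linA 1 (x - y) y; rewrite !scale1r subrK => ->; rewrite addrK.
Qed.

Lemma bounded_opB (A B : V -> V) :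
  bounded_op ip A -> bounded_op ip B -> bounded_op ip (fun x => A x - B x).
Proof.
move=> [linA [M1 hA]] [linB [M2 hB]]; split.
  by move=> a x y; rewrite linA linB scalerBr addrACA opprD.
exists (M1 + M2) => x; have := hnormD (A x) (- B x); rewrite hnormN.
by have := hA x; have := hB x; lra.
Qed.

Lemma bounded_op_comp (A B : V -> V) :
  bounded_op ip A -> bounded_op ip B -> bounded_op ip (A \o B).
Proof.
move=> [linA [M1 hA]] [linB [M2 hB]]; split=> [a x y /=|]; first by rewrite linB linA.
exists (`|M1| * M2) => x /=; have := hA (B x); have := hB x.
have := hnorm_ge0 (B x); have := hnorm_ge0 (A (B x)); have := ler_norm M1.
by have := normr_ge0 M1; nra.
Qed.

Lemma opnorm_has_sup (A : V -> V) : bounded_op ip A ->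
  has_sup [set hnorm (A x) | x in [set x | hnorm x <= 1]].
Proof.
move=> [_ [M hA]]; split; first by exists (hnorm (A 0)), 0; rewrite //= hnorm0 ler01.
exists `|M| => _ [x /= x1 <-]; have := hA x; have := hnorm_ge0 x.
by have := ler_norm M; have := normr_ge0 M; nra.
Qed.

Lemma opnorm_ubound (A : V -> V) x : bounded_op ip A -> hnorm x <= 1 ->
  hnorm (A x) <= opnorm ip A.
Proof. by move=> bA x1; have := sup_upper_bound (opnorm_has_sup bA); apply; exists x. Qed.

Lemma opnorm_le (A : V -> V) M : (forall x, hnorm x <= 1 -> hnorm (A x) <= M) ->
  opnorm ip A <= M.
Proof.
move=> hA; apply: ge_sup => [|_ [x x1 <-]]; last exact: hA.
by exists (hnorm (A 0)), 0; rewrite //= hnorm0 ler01.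
Qed.

Lemma opnorm_ge0 (A : V -> V) : bounded_op ip A -> 0 <= opnorm ip A.
Proof.
move=> bA; apply: le_trans (opnorm_ubound (x := 0) bA _); first exact: hnorm_ge0.
by rewrite hnorm0.
Qed.

Lemma hnorm_op_le (A : V -> V) v : bounded_op ip A ->
  hnorm (A v) <= opnorm ip A * hnorm v.
Proof.
move=> bA; have [v0|v_neq0] := eqVneq (hnorm v) 0.
  by rewrite (hnorm_eq0 v0) linear_op0 ?hnorm0 ?mulr0 //; case: bA.
set t := hnorm v in v_neq0 *.
have t_gt0 : 0 < t by rewrite lt_def v_neq0 hnorm_ge0.
have -> : v = (t%:C)%C *: ((t^-1%:C)%C *: v).
  by rewrite scalerA -rmorphM /= mulfV // scale1r.
have u1 : hnorm ((t^-1%:C)%C *: v) = 1 by rewrite hnormZ ?invr_ge0 ?ltW // mulVf.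
rewrite linear_opZ; last by case: bA.
rewrite hnormZ ?(ltW t_gt0) // mulrC ler_pM2r //.
by rewrite opnorm_ubound ?u1.
Qed.

Lemma op_dist_refl (A : V -> V) : bounded_op ip A -> op_dist ip A A = 0%:E.
Proof.
move=> bA; congr (_%:E); apply/eqP; rewrite eq_le opnorm_ge0 ?andbT.
  by apply: opnorm_le => x _; rewrite subrr hnorm0.
exact: bounded_opB.
Qed.

Lemma opnormB_le (A B C : V -> V) :
  bounded_op ip A -> bounded_op ip B -> bounded_op ip C ->
  opnorm ip (fun x => A x - C x) <=
  opnorm ip (fun x => A x - B x) + opnorm ip (fun x => B x - C x).
Proof.
move=> bA bB bC; apply: opnorm_le => x x1; have := hnormB_le (A x) (B x) (C x).
have := opnorm_ubound (bounded_opB bA bB) x1.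
by have := opnorm_ubound (bounded_opB bB bC) x1; lra.
Qed.

Lemma GLH_bounded (A : V -> V) : GLH ip A -> bounded_op ip A.
Proof. by case. Qed.

Lemma GLH_id : GLH ip id.
Proof.
have bid : bounded_op ip (@id V) by split=> //; exists 1 => x; rewrite mul1r.
by split=> //; exists id.
Qed.

Lemma GLH_comp (A B : V -> V) : GLH ip A -> GLH ip B -> GLH ip (A \o B).
Proof.
move=> [bA [A' [bA' AK A'K]]] [bB [B' [bB' BK B'K]]].
split; first exact: bounded_op_comp.
exists (B' \o A'); split; first exact: bounded_op_comp.
  by move=> x /=; rewrite AK BK.
by move=> x /=; rewrite B'K A'K.
Qed.

Lemma GLH_inv (A : V -> V) : GLH ip A ->
  exists B, [/\ GLH ip B, cancel A B & cancel B A].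
Proof. by move=> [bA [B [bB AK BK]]]; exists B; split=> //; split=> //; exists A. Qed.

Lemma op_ball_open (A : V -> V) (d : R) : GLH ip A ->
  metric_open (op_dist ip) (GLH ip) [set B | GLH ip B /\ (op_dist ip A B < d%:E)%E].
Proof.
move=> GA; split=> [B [] //|B [GB]]; rewrite lte_fin => AB_lt.
exists (d - opnorm ip (fun x => A x - B x)); first by rewrite subr_gt0.
move=> C GC; rewrite /op_dist lte_fin => BC_lt; split=> //; rewrite lte_fin.
have := opnormB_le (GLH_bounded GA) (GLH_bounded GB) (GLH_bounded GC); lra.
Qed.

Lemma principal_homogeneous_orbit (X : ptopologicalType) (f0 : X -> V) :
  (forall A B, GLH ip A -> GLH ip B -> opact A f0 = opact B f0 -> A = B) ->
  principal_homogeneous (GLH ip) [set opact A f0 | A in GLH ip].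
Proof.
move=> orbit_inj; exists (@opact _ _ X); split=> //.
- by move=> A _ GA [B GB <-]; exists (A \o B); first exact: GLH_comp.
- move=> _ _ [B GB <-] [C GC <-]; have [B' [GB' BK _]] := GLH_inv GB.
  by exists (C \o B'); [exact: GLH_comp | apply: funext => x; rewrite /opact /= BK].
- move=> A B _ GA GB [C GC <-] ACBC; have [C' [GC' _ C'K]] := GLH_inv GC.
  have AB_C : A \o C = B \o C by apply: orbit_inj ACBC; exact: GLH_comp.
  by apply: funext => x; rewrite -(C'K x); exact: (congr1 (fun F => F (C' x)) AB_C).
Qed.

Section SupNorm.
Variable X : ptopologicalType.

Lemma norm_J_ubound (f : X -> V) x : ((hnorm (f x))%:E <= norm_J ip f)%E.
Proof. by apply: ereal_sup_ubound; exists x. Qed.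

Lemma norm_J_le (f : X -> V) M : (forall x, (hnorm (f x))%:E <= M)%E ->
  (norm_J ip f <= M)%E.
Proof. by move=> fM; apply: ge_ereal_sup => _ [x _ <-]. Qed.

Lemma norm_J_ge0 (f : X -> V) : (0 <= norm_J ip f)%E.
Proof. by apply: le_trans (norm_J_ubound f point); rewrite lee_fin hnorm_ge0. Qed.

Lemma norm_J_fin (f : X -> V) : (norm_J ip f < +oo)%E -> exists n : R, norm_J ip f = n%:E.
Proof.
move=> f_fin; exists (fine (norm_J ip f)); rewrite fineK //.
by rewrite ge0_fin_numE // norm_J_ge0.
Qed.

Lemma distJ_refl (f : X -> V) : distJ ip f f = 0%:E.
Proof.
apply/eqP; rewrite eq_le norm_J_ge0 andbT; apply: norm_J_le => x.
by rewrite subrr hnorm0.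
Qed.

Lemma distJ_ball_open (S : set (X -> V)) f (d : R) :
  metric_open (distJ ip) S [set g | S g /\ (distJ ip f g < d%:E)%E].
Proof.
split=> [g [] //|g [Sg fg_lt]].
have [n fg_n] := norm_J_fin (lt_trans fg_lt (ltry d)).
rewrite /distJ fg_n lte_fin in fg_lt.
exists ((d - n) / 2) => [|h Sh gh_lt]; first by rewrite divr_gt0 // subr_gt0.
split=> //; apply: (@le_lt_trans _ _ (n + (d - n) / 2)%:E); last by rewrite lte_fin; lra.
apply: norm_J_le => x; rewrite lee_fin.
have := norm_J_ubound (fun x => f x - g x) x; rewrite fg_n lee_fin /=.
have := le_lt_trans (norm_J_ubound (fun x => g x - h x) x) gh_lt.
by rewrite lte_fin /=; have := hnormB_le (f x) (g x) (h x); lra.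
Qed.

(* Writing [A u - A' w = A (u - w) + (A - A') w] keeps [A'] out of the
  operator-norm factors. *)
Lemma hnorm_opact_sub (A A' : V -> V) u w : bounded_op ip A -> bounded_op ip A' ->
  hnorm (A u - A' w) <= opnorm ip A * hnorm (u - w)
                        + opnorm ip (fun x => A x - A' x) * hnorm w.
Proof.
move=> bA bA'; have -> : A u - A' w = A (u - w) + (A w - A' w).
  by rewrite (linear_opB _ _ bA.1) addrA subrK.
apply: le_trans (hnormD _ _) _.
by apply: lerD; [exact: hnorm_op_le | exact: (hnorm_op_le _ (bounded_opB bA bA'))].
Qed.

Lemma opact_near (A : V -> V) (f0 : X -> V) (e : R) :
  bounded_op ip A -> (norm_J ip f0 < +oo)%E -> 0 < e ->
  exists2 d : R, 0 < d & forall (A' : V -> V) (f0' : X -> V), bounded_op ip A' ->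
    (op_dist ip A A' < d%:E)%E -> (distJ ip f0 f0' < d%:E)%E ->
    (distJ ip (opact A f0) (opact A' f0') < e%:E)%E.
Proof.
move=> bA /norm_J_fin [n f0_n] e_gt0.
have n0 : 0 <= n by rewrite -lee_fin -f0_n norm_J_ge0.
have a0 := opnorm_ge0 bA; set a := opnorm ip A in a0 *.
have K_gt0 : 0 < a + n + 1 by lra.
have [d d_gt0 [d1 dK]] := exists_small_factor e_gt0 K_gt0.
exists d => // A' f0' bA'; rewrite /op_dist lte_fin => AA'_lt ff'_lt.
have o0 := opnorm_ge0 (bounded_opB bA bA').
set o := opnorm ip _ in AA'_lt o0.
apply: (@le_lt_trans _ _ (d * (a + n + 1))%:E); last by rewrite lte_fin.
apply: norm_J_le => x; rewrite lee_fin /opact.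
have u_le : hnorm (f0 x) <= n by rewrite -lee_fin -f0_n norm_J_ubound.
have uw_lt : hnorm (f0 x - f0' x) < d.
  by rewrite -lte_fin; apply: le_lt_trans ff'_lt; exact: (norm_J_ubound (fun x => f0 x - f0' x)).
have w_le : hnorm (f0' x) <= n + 1.
  by have := hnormB_le 0 (f0 x) (f0' x); rewrite !sub0r !hnormN; lra.
have := hnorm_opact_sub (f0 x) (f0' x) bA bA'; rewrite -/a -/o.
by have := hnorm_ge0 (f0 x - f0' x); have := hnorm_ge0 (f0' x); nra.
Qed.

Lemma opact_cont (S T : set (X -> V)) :
  (forall f, S f -> (norm_J ip f < +oo)%E) ->
  (forall A f, GLH ip A -> S f -> T (opact A f)) ->
  cont_on (GLH ip `*` S) (prod_open (GLH ip) (metric_open (op_dist ip) (GLH ip))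
                                    S (metric_open (distJ ip) S))
          T (metric_open (distJ ip) T) (fun p => opact p.1 p.2).
Proof.
move=> S_fin ST; split=> [[A f] [/= GA Sf]|U [_ U_open]]; first exact: ST.
split=> [p [] //|[A f] [[/= GA Sf] Uf]].
have [e e_gt0 e_U] := U_open _ Uf.
have [d d_gt0 d_e] := opact_near (GLH_bounded GA) (S_fin _ Sf) e_gt0.
exists [set B | GLH ip B /\ (op_dist ip A B < d%:E)%E],
       [set g | S g /\ (distJ ip f g < d%:E)%E].
split; [exact: op_ball_open | exact: distJ_ball_open | | |].
- by split=> //; rewrite (op_dist_refl (GLH_bounded GA)) lte_fin.
- by split=> //; rewrite distJ_refl lte_fin.
move=> [B g] [/= [GB AB_lt] [Sg fg_lt]]; split=> //.
by apply: e_U; [exact: ST | exact: d_e (GLH_bounded GB) AB_lt fg_lt].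
Qed.

Lemma opact_cont_l (f0 : X -> V) (T : set (X -> V)) :
  (norm_J ip f0 < +oo)%E -> (forall A, GLH ip A -> T (opact A f0)) ->
  cont_on (GLH ip) (metric_open (op_dist ip) (GLH ip))
          T (metric_open (distJ ip) T) (fun A => opact A f0).
Proof.
move=> f0_fin GT; split=> // U [_ U_open]; split=> [A [] //|A [GA Uf]].
have [e e_gt0 e_U] := U_open _ Uf.
have [d d_gt0 d_e] := opact_near (GLH_bounded GA) f0_fin e_gt0.
exists d => // B GB AB_lt; split=> //; apply: e_U; first exact: GT.
by apply: d_e (GLH_bounded GB) AB_lt _; rewrite distJ_refl lte_fin.
Qed.

End SupNorm.
End HilbertSpace.

Section SubspaceTopology.

Lemma cont_on_comp {T1 T2 T3 : Type} (S1 : set T1) O1 (S2 : set T2) O2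
    (S3 : set T3) O3 (f : T1 -> T2) (g : T2 -> T3) :
  cont_on S1 O1 S2 O2 f -> cont_on S2 O2 S3 O3 g -> cont_on S1 O1 S3 O3 (g \o f).
Proof.
move=> [fS f_cont] [gS g_cont]; split=> [x /fS /gS //|U /g_cont /f_cont].
suff -> : S1 `&` (g \o f) @^-1` U = S1 `&` f @^-1` (S2 `&` g @^-1` U) by [].
apply/seteqP; split=> x [S1x Ux]; split=> //; last by case: Ux.
by split=> //; exact: fS.
Qed.

Lemma cont_on_pair_map {T1 T2 U1 U2 : Type} (S1 : set T1) O1 (S2 : set T2) O2
    (S1' : set U1) O1' (S2' : set U2) O2' (f1 : T1 -> U1) (f2 : T2 -> U2) :
  cont_on S1 O1 S1' O1' f1 -> cont_on S2 O2 S2' O2' f2 ->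
  cont_on (S1 `*` S2) (prod_open S1 O1 S2 O2) (S1' `*` S2') (prod_open S1' O1' S2' O2')
          (fun p => (f1 p.1, f2 p.2)).
Proof.
move=> [f1S f1_cont] [f2S f2_cont].
split=> [[x y] [/= /f1S ? /f2S ?] //|U [_ U_open]].
split=> [p [] //|[x y] [[/= S1x S2y] /U_open [W1 [W2 [W1o W2o W1x W2y W_U]]]]].
exists (S1 `&` f1 @^-1` W1), (S2 `&` f2 @^-1` W2).
split=> //; [exact: f1_cont | exact: f2_cont |].
by move=> [x' y'] [/= [S1x' W1x'] [S2y' W2y']]; split=> //; apply: W_U.
Qed.

Lemma cont_on_swap {T1 T2 : Type} (S1 : set T1) O1 (S2 : set T2) O2 :
  cont_on (S1 `*` S2) (prod_open S1 O1 S2 O2) (S2 `*` S1) (prod_open S2 O2 S1 O1)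
          (fun p => (p.2, p.1)).
Proof.
split=> [[x y] [] //|U [U_sub U_open]].
split=> [p [] //|[x y] [_ /U_open [W2 [W1 [W2o W1o W2y W1x W_U]]]]].
exists W1, W2; split=> // [[x' y'] [/= W1x' W2y']].
have Uyx : U (y', x') by apply: W_U.
by have [/= ? ?] := U_sub _ Uyx.
Qed.

Lemma homeomorphism_sym {T1 T2 : Type} (S1 : set T1) O1 (S2 : set T2) O2 f :
  homeomorphism S1 O1 S2 O2 f -> exists g, homeomorphism S2 O2 S1 O1 g.
Proof. by move=> [g [f_cont g_cont gK fK]]; exists g, f. Qed.

Lemma homeomorphism_comp {T1 T2 T3 : Type} (S1 : set T1) O1 (S2 : set T2) O2
    (S3 : set T3) O3 (f : T1 -> T2) (g : T2 -> T3) :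
  homeomorphism S1 O1 S2 O2 f -> homeomorphism S2 O2 S3 O3 g ->
  homeomorphism S1 O1 S3 O3 (g \o f).
Proof.
move=> [f' [f_cont f'_cont f'K fK]] [g' [g_cont g'_cont g'K gK]].
exists (f' \o g'); split; [exact: cont_on_comp f_cont g_cont |
  exact: cont_on_comp g'_cont f'_cont | |].
- by move=> x S1x /=; rewrite g'K ?f'K //; exact: f_cont.1.
- by move=> z S3z /=; rewrite fK ?gK //; exact: g'_cont.1.
Qed.

Lemma homeomorphism_swap {T1 T2 : Type} (S1 : set T1) O1 (S2 : set T2) O2 :
  homeomorphism (S1 `*` S2) (prod_open S1 O1 S2 O2) (S2 `*` S1) (prod_open S2 O2 S1 O1)
                (fun p => (p.2, p.1)).
Proof. by exists (fun p => (p.2, p.1)); split; try exact: cont_on_swap; case. Qed.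

Variable R : realType.

Lemma metric_open_self {T : Type} (d : T -> T -> \bar R) (S : set T) :
  metric_open d S S.
Proof. by split=> // u _; exists 1. Qed.

Lemma cont_on_id {T : Type} (d : T -> T -> \bar R) (S : set T) :
  cont_on S (metric_open d S) S (metric_open d S) id.
Proof.
split=> // U [_ U_open]; split=> [x [] //|u [Su /U_open [e e_gt0 e_U]]].
by exists e => // v Sv uv_lt; split=> //; exact: e_U.
Qed.

Lemma cont_on_fst {T1 T2 : Type} (d1 : T1 -> T1 -> \bar R) (d2 : T2 -> T2 -> \bar R)
    (S1 : set T1) (S2 : set T2) :
  cont_on (S1 `*` S2) (prod_open S1 (metric_open d1 S1) S2 (metric_open d2 S2))
          S1 (metric_open d1 S1) fst.
Proof.
split=> [p [] //|U U_open]; split=> [p [] //|[x y] [[/= S1x S2y] Ux]].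
exists U, S2; split=> //; first exact: metric_open_self.
by move=> [x' y'] [/= Ux' S2y']; split=> //; split=> //; exact: U_open.1.
Qed.

Lemma cont_on_restrict {T T' : Type} (d : T -> T -> \bar R) (S S' : set T)
    (ST : set T') OT (f : T -> T') :
  S' `<=` S -> cont_on S (metric_open d S) ST OT f -> cont_on S' (metric_open d S') ST OT f.
Proof.
move=> S'S [fS f_cont]; split=> [x /S'S /fS //|U /f_cont [_ U_open]].
split=> [x [] //|u [S'u Ufu]].
have [e e_gt0 e_U] := U_open u (conj (S'S _ S'u) Ufu).
by exists e => // v S'v uv_lt; split=> //; exact: (e_U v (S'S _ S'v) uv_lt).2.
Qed.

(* With [B] itself as trivialising neighbourhood, the projection is the first
  component of a global trivialisation [vt]. *)
Lemma fiber_bundle_of_trivialization {TE TB : Type} (dE : TE -> TE -> \bar R)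
    (dB : TB -> TB -> \bar R) (E E1 : set TE) (B : set TB) (e1 : TE)
    (vt : TE -> TB * TE) :
  E1 e1 ->
  homeomorphism E (metric_open dE E)
    (B `*` E1) (prod_open B (metric_open dB B) E1 (metric_open dE E1)) vt ->
  fiber_bundle E (metric_open dE E) B (metric_open dB B)
    (metric_open dE) (metric_open dB) E1 (metric_open dE E1).
Proof.
move=> E1e1 vt_homeo; have [vt' [vt_cont vt'_cont vt'K vtK]] := vt_homeo.
have vtE x : E x -> (B `*` E1) (vt x) by exact: vt_cont.1.
exists (fun e => (vt e).1); split.
- exact: cont_on_comp vt_cont (cont_on_fst _ _ _ _).
- move=> b Bb; exists (vt' (b, e1)); first exact: vt'_cont.1.
  by rewrite vtK.
- move=> e Ee; exists B; split=> //.
    by exists B; split; [exact: metric_open_self | have [] := vtE e Ee |].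
  have -> : E `&` (fun e => (vt e).1) @^-1` B = E.
    by apply/seteqP; split=> [x [] //|x Ex]; split=> //; have [] := vtE x Ex.
  by exists vt.
Qed.

End SubspaceTopology.

Section ThetaStar.
Variables (R : realType) (V : lmodType R[i]) (ip : V -> V -> R[i]).
Variables (X : ptopologicalType) (mu : {measure set (g_sigma_algebraType (@open X)) -> \bar R}).
Variables (Fb0 : set (X -> V)) (f10 : X -> V) (zinv : (X -> V) -> (V -> V) * (X -> V)).
Hypothesis hip : is_inner_product ip.
Hypothesis Fb0_fin : forall f, Fb0 f -> (norm_J ip f < +oo)%E.
Hypothesis Fb0_f10 : Fb0 f10.
Hypothesis zinvK : forall p, (GLH ip `*` Fb0) p ->
  Fset ip mu (opact p.1 p.2) /\ zinv (opact p.1 p.2) = p.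
Hypothesis zinvE : forall f, Fset ip mu f ->
  (GLH ip `*` Fb0) (zinv f) /\ opact (zinv f).1 (zinv f).2 = f.
Hypothesis zinv_cont : cont_on (Fset ip mu) (metric_open (distJ ip) (Fset ip mu))
  (GLH ip `*` Fb0) (prod_open (GLH ip) (metric_open (op_dist ip) (GLH ip))
                              Fb0 (metric_open (distJ ip) Fb0)) zinv.

Local Notation F := (Fset ip mu).
Local Notation F1 := [set opact A f10 | A in GLH ip].

Lemma zetaK A f : GLH ip A -> Fb0 f -> F (opact A f) /\ zinv (opact A f) = (A, f).
Proof. by move=> GA Ff; exact: (zinvK (p := (A, f)) (conj GA Ff)). Qed.

Lemma zinv_orbit A : GLH ip A -> (zinv (opact A f10)).1 = A.
Proof. by move=> GA; rewrite (zetaK GA Fb0_f10).2. Qed.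

Lemma orbit_inj A B : GLH ip A -> GLH ip B -> opact A f10 = opact B f10 -> A = B.
Proof. by move=> GA GB AB; rewrite -(zinv_orbit GA) AB zinv_orbit. Qed.

Lemma theta_cont : cont_on F1 (metric_open (distJ ip) F1)
  (GLH ip) (metric_open (op_dist ip) (GLH ip)) (fun f => (zinv f).1).
Proof.
have := cont_on_comp zinv_cont (cont_on_fst (op_dist ip) (distJ ip) (GLH ip) Fb0).
by apply: cont_on_restrict => _ [A GA <-]; exact: (zetaK GA Fb0_f10).1.
Qed.

Lemma theta_star_homeomorphism :
  homeomorphism (F1 `*` Fb0)
    (prod_open F1 (metric_open (distJ ip) F1) Fb0 (metric_open (distJ ip) Fb0))
    F (metric_open (distJ ip) F) (fun p => opact (zinv p.1).1 p.2).
Proof.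
exists (fun f => (opact (zinv f).1 f10, (zinv f).2)); split.
- apply: cont_on_comp (cont_on_pair_map theta_cont (cont_on_id _ _)) (opact_cont hip Fb0_fin _).
  by move=> A f GA Ff; exact: (zetaK GA Ff).1.
- have orbit_F1 A : GLH ip A -> F1 (opact A f10) by exists A.
  have orbit_cont := opact_cont_l hip (Fb0_fin Fb0_f10) orbit_F1.
  exact: cont_on_comp zinv_cont (cont_on_pair_map orbit_cont (cont_on_id _ _)).
- move=> [f1 f0] [/= [A GA <-] Ff0].
  by rewrite zinv_orbit // (zetaK GA Ff0).2.
- move=> f Ff /=; have [[GA _] zinvK_f] := zinvE Ff.
  by rewrite zinv_orbit.
Qed.

End ThetaStar.

Theorem mainTheorem10 (R : realType) (V : lmodType R[i]) (ip : V -> V -> R[i])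
  (X : ptopologicalType) (mu : {measure set (g_sigma_algebraType (@open X)) -> \bar R})
  (Fb0 : set (X -> V)) (f10 : X -> V)
  (zinv : (X -> V) -> (V -> V) * (X -> V)) :
  separable_hilbert ip ->
  locally_compact [set: X] ->
  is_F0_transversal ip mu Fb0 ->
  Fb0 f10 ->
  (* zeta (A, f) = A f is a bijection GLH(H) x Fb0 -> F, with inverse zinv *)
  (forall p, (GLH ip `*` Fb0) p ->
     Fset ip mu (opact p.1 p.2) /\ zinv (opact p.1 p.2) = p) ->
  (forall f, Fset ip mu f -> (GLH ip `*` Fb0) (zinv f) /\ opact (zinv f).1 (zinv f).2 = f) ->
  (* zeta^{-1} is continuous *)
  cont_on (Fset ip mu) (metric_open (distJ ip) (Fset ip mu))
          (GLH ip `*` Fb0)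
          (prod_open (GLH ip) (metric_open (op_dist ip) (GLH ip))
                     Fb0 (metric_open (distJ ip) Fb0))
          zinv ->
  let F1 := [set opact A f10 | A in GLH ip] in
  let theta := fun f : X -> V => (zinv f).1 in
  let theta_star := fun p : (X -> V) * (X -> V) => opact (theta p.1) p.2 in
  [/\ homeomorphism (F1 `*` Fb0)
        (prod_open F1 (metric_open (distJ ip) F1) Fb0 (metric_open (distJ ip) Fb0))
        (Fset ip mu) (metric_open (distJ ip) (Fset ip mu)) theta_star,
      fiber_bundle (Fset ip mu) (metric_open (distJ ip) (Fset ip mu))
        Fb0 (metric_open (distJ ip) Fb0)
        (metric_open (distJ ip)) (metric_open (distJ ip))
        F1 (metric_open (distJ ip) F1) &
      principal_homogeneous (GLH ip) F1].
Proof.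
move=> [hip _ _] _ [F0_Fb0 _] Fb0_f10 zinvK zinvE zinv_cont F1 theta theta_star.
have Fb0_fin f : Fb0 f -> (norm_J ip f < +oo)%E by move=> /F0_Fb0 [].
have theta_star_homeo := theta_star_homeomorphism hip Fb0_fin Fb0_f10 zinvK zinvE zinv_cont.
have [theta_star' theta_star'_homeo] := homeomorphism_sym theta_star_homeo.
split=> //.
- apply: (fiber_bundle_of_trivialization (e1 := f10) _
    (homeomorphism_comp theta_star'_homeo (homeomorphism_swap _ _ _ _))).
  by exists id => //; exact: GLH_id.
- exact: principal_homogeneous_orbit (orbit_inj Fb0_f10 zinvK).
Qed.
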